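(* For every $\varepsilon>0$ and integer $k\ge2$ there exists $\eta=\eta(\varepsilon,k,\Omega)>0$ such that for every $n>1/\eta$ every $\mu\in\mathcal P(\Omega^n)$ has pairwise disjoint $(\varepsilon,k)$-states $S_1,\dots,S_N$ such that $\mu(S_i)\ge\eta$ for all $i\in[N]$ and $\sum_{i=1}^N\mu(S_i)\ge1-\varepsilon$.
   Context: $\Omega$ is a fixed finite nonempty set, $\mathcal P(\mathcal X)$ the set of probability measures on a finite set $\mathcal X$, $\|\cdot\|_{TV}$ total variation. For $\mu\in\mathcal P(\Omega^n)$ and $S\subset\Omega^n$ with $\mu(S)>0$, $\mu[\cdot|S]$ is the conditional measure; for $x_1,\dots,x_k\in[n]$, $\mu_{\downarrow\{x_1,\dots,x_k\}}[\cdot|S]$ denotes the joint law of $(\boldsymbol\sigma(x_1),\dots,\boldsymbol\sigma(x_k))$ for $\boldsymbol\sigma\sim\mu[\cdot|S]$ and $\mu_{\downarrow x}[\cdot|S]$ the law of $\boldsymbol\sigma(x)$. A set $S\subset\Omega^n$ is an $(\varepsilon,k)$-state of $\mu$ if $\mu(S)>0$ and $\frac1{n^k}\sum_{x_1,\dots,x_k\in[n]}\|\mu_{\downarrow\{x_1,\dots,x_k\}}[\cdot|S]-\mu_{\downarrow x_1}[\cdot|S]\otimes\cdots\otimes\mu_{\downarrow x_k}[\cdot|S]\|_{TV}<\varepsilon$. *)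

From HB Require Import structures.
From mathcomp Require Import all_boot all_order all_algebra.
From mathcomp Require Import reals.
Set Implicit Arguments. Unset Strict Implicit. Unset Printing Implicit Defensive.
Import Order.TTheory GRing.Theory Num.Theory.
Local Open Scope ring_scope.

Section Defs.
Variables (R : realType) (Omega : finType).

Definition is_prob (X : finType) (mu : {ffun X -> R}) : Prop :=
  (forall x, 0 <= mu x) /\ \sum_(x : X) mu x = 1.

Definition meas (X : finType) (mu : {ffun X -> R}) (S : {set X}) : R :=
  \sum_(x in S) mu x.

(* total variation distance: sup_A |p(A) - q(A)| = (1/2) sum_x |p x - q x| *)
Definition tv (X : finType) (p q : {ffun X -> R}) : R :=
  2^-1 * \sum_(x : X) `|p x - q x|.

(* mu_{down {x_1,..,x_k}}[ . | S ] : joint law of (sigma(x_1),..,sigma(x_k))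
   for sigma ~ mu[ . | S ] *)
Definition cond_marg (n k : nat) (mu : {ffun {ffun 'I_n -> Omega} -> R})
  (S : {set {ffun 'I_n -> Omega}}) (xs : 'I_k -> 'I_n) :
  {ffun {ffun 'I_k -> Omega} -> R} :=
  [ffun t : {ffun 'I_k -> Omega} =>
     (\sum_(s in S | [forall j, s (xs j) == t j]) mu s) / meas mu S].

Definition cond_marg1 (n : nat) (mu : {ffun {ffun 'I_n -> Omega} -> R})
  (S : {set {ffun 'I_n -> Omega}}) (x : 'I_n) : {ffun Omega -> R} :=
  [ffun w : Omega => (\sum_(s in S | s x == w) mu s) / meas mu S].

Definition prod_marg (n k : nat) (mu : {ffun {ffun 'I_n -> Omega} -> R})
  (S : {set {ffun 'I_n -> Omega}}) (xs : 'I_k -> 'I_n) :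
  {ffun {ffun 'I_k -> Omega} -> R} :=
  [ffun t : {ffun 'I_k -> Omega} => \prod_(j < k) cond_marg1 mu S (xs j) (t j)].

Definition is_state (n : nat) (mu : {ffun {ffun 'I_n -> Omega} -> R})
  (eps : R) (k : nat) (S : {set {ffun 'I_n -> Omega}}) : Prop :=
  0 < meas mu S /\
  (n%:R ^+ k)^-1 * \sum_(xs : {ffun 'I_k -> 'I_n})
      tv (cond_marg mu S xs) (prod_marg mu S xs) < eps.

End Defs.

From HB Require Import structures.
From mathcomp Require Import all_boot all_order all_algebra.
From mathcomp Require Import reals.
From mathcomp Require Import ring lra.
Import Order.TTheory GRing.Theory Num.Theory.
Local Open Scope ring_scope.

(* Energy increment.  The potential of a map f : Omega^n -> T,
     Phi f = 1/n sum_x sum_w sum_t mu(f = t, s x = w)^2 / mu(f = t),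
   lies in [0, 1], and refining f by g raises it by the variances, within the
   fibres of f, of the law of each coordinate across the values of g.  If a fibre S
   is not an (eps,k)-state, telescope the joint law of s(x_1), ..., s(x_k) on S
   against the product of its marginals, revealing one coordinate at a time; by
   AM-GM each step is bounded by the variance of the law of s(x_j) across the values
   of the coordinates revealed before it.  Averaging over x_1, ..., x_k, as long as
   the fibres that are not states carry mass at least eps/2, refining f by the values
   of fewer than k coordinates (at most |Omega|^k new classes) raises Phi by a fixed
   amount depending on eps, k and |Omega| only.  So after boundedly many rounds a
   partition into boundedly many fibres has non-state mass below eps/2, and dropping
   the fibres of mass below eta loses at most eps/2 more. *)

Set Implicit Arguments.
Unset Strict Implicit.

Lemma sumr_delta (R : pzSemiRingType) (I : finType) (a : I) :
  \sum_(i : I) ((i == a)%:R : R) = 1.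
Proof. by rewrite (bigD1 a) //= eqxx big1 ?addr0 // => i /negbTE ->. Qed.

Lemma exists_ge_mean (R : realDomainType) (I : finType) (F : I -> R) (c : R) :
  (0 < #|I|)%N -> c *+ #|I| <= \sum_i F i -> exists i, c <= F i.
Proof.
move=> /card_gt0P [i0 _] le_c_sum.
have [/existsP [i /idP le_c_Fi] | /existsPn lt_F_c] := boolP [exists i, c <= F i].
  by exists i.
suff : \sum_i F i < c *+ #|I| by rewrite ltNge le_c_sum.
rewrite -sumr_const; apply: ltr_sum => [|i _]; first by apply/hasP; exists i0.
by rewrite ltNge lt_F_c.
Qed.

Lemma normr_le_amgm (R : realFieldType) (l z : R) :
  0 < l -> `|z| <= z ^+ 2 / (2 * l) + l / 2.
Proof.
move=> l_gt0; rewrite -subr_ge0.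
have -> : z ^+ 2 / (2 * l) + l / 2 - `|z| = (`|z| - l) ^+ 2 / (2 * l).
  by rewrite -[z ^+ 2](real_normK (num_real z)); field; rewrite lt0r_neq0.
by rewrite divr_ge0 ?sqr_ge0 ?mulr_ge0 ?(ltW l_gt0).
Qed.

Lemma sum_weighted_sqr_dev (R : fieldType) (I : finType) (a b : I -> R) :
  (forall i, b i = 0 -> a i = 0) ->
  \sum_i b i * (a i / b i - (\sum_i a i) / (\sum_i b i)) ^+ 2 =
  \sum_i a i ^+ 2 / b i - (\sum_i a i) ^+ 2 / (\sum_i b i).
Proof.
move=> b0_a0; set A := \sum_i a i; set B := \sum_i b i; set c := A / B.
have expand i : b i * (a i / b i - c) ^+ 2 =
    a i ^+ 2 / b i - 2 * c * a i + c ^+ 2 * b i.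
  have [bi0 | bi_neq0] := eqVneq (b i) 0; last by field.
  by rewrite bi0 (b0_a0 _ bi0); ring.
under eq_bigr do rewrite expand.
rewrite !big_split /= sumrN -!big_distrr /= -/A -/B /c.
have [-> | B_neq0] := eqVneq B 0; first by rewrite invr0 !mulr0; ring.
by field.
Qed.

Lemma sum_ffun_resample (R : pzSemiRingType) (I J : finType) (j : I)
    (h : {ffun I -> J} -> J -> R) :
  (forall (xs xs' : {ffun I -> J}) y,
     (forall i, i != j -> xs i = xs' i) -> h xs y = h xs' y) ->
  \sum_xs \sum_y h xs y = #|J|%:R * \sum_xs h xs (xs j).
Proof.
move=> h_indep.
pose upd (p : {ffun I -> J} * J) := ([ffun i => if i == j then p.2 else p.1 i], p.1 j).
have updK : involutive upd.
  case=> xs y; rewrite /upd /= ffunE eqxx; congr pair.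
  by apply/ffunP => i; rewrite !ffunE; case: eqP => // ->.
rewrite pair_bigA (reindex_inj (inv_inj updK)) /=.
rewrite (eq_bigr (fun p => h p.1 (p.1 j))); last first.
  by move=> p _; apply: h_indep => i /negbTE ij; rewrite ffunE ij.
rewrite -(pair_bigA _ (fun xs (y : J) => h xs (xs j))) big_distrr /=.
by apply: eq_bigr => xs _; rewrite sumr_const mulr_natl.
Qed.

Section PrefixPad.
Variables (R : numDomainType) (X : finType) (k : nat) (j : 'I_k) (w0 : X).
Variable p : 'I_k -> X -> R.
Hypotheses (p_ge0 : forall i w, 0 <= p i w) (p_sum1 : forall i, \sum_w p i w = 1).

Definition prefix_pad (t : {ffun 'I_k -> X}) : {ffun 'I_k -> X} :=
  [ffun i : 'I_k => if (i < j)%N then t i else w0].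

Lemma sum_prefix_pad_prod_le1 (r : {ffun 'I_k -> X}) (w : X) :
  \sum_t ((prefix_pad t == r) && (t j == w))%:R * \prod_(i < k | (j < i)%N) p i (t i)
  <= 1.
Proof.
pose d (i : 'I_k) (y : X) : R :=
  if (i < j)%N then (y == r i)%:R else if i == j then (y == w)%:R else p i y.
have d_ge0 (i : 'I_k) y : 0 <= d i y by rewrite /d; do 2?case: ifP => _; rewrite ?ler0n.
have prod_sum_d : \prod_i \sum_y d i y = 1 :> R.
  rewrite big1 // => i _; rewrite /d.
  by case: (i < j)%N; [|case: (i == j)]; [exact: sumr_delta..|exact: p_sum1].
rewrite -[leRHS]prod_sum_d bigA_distr_bigA /=; apply: ler_sum => t _.
case: andP => [[/eqP pad_t /eqP tj] | _]; last by rewrite mul0r prodr_ge0.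
rewrite mul1r [leRHS](bigID (fun i : 'I_k => (j < i)%N)) /=.
rewrite [X in _ <= _ * X]big1 ?mulr1 => [|i]; last first.
  rewrite -leqNgt leq_eqVlt /d; case: eqP => [/val_inj -> _ | _ /= ij].
    by rewrite ltnn eqxx tj eqxx.
  by rewrite ij -pad_t ffunE ij eqxx.
rewrite [leRHS](eq_bigr (fun i => p i (t i))) ?lexx // => i ji.
by rewrite /d ltnNge (ltnW ji) /= eq_sym -val_eqE (ltn_eqF ji).
Qed.

Lemma sum_prefix_pad_prod_le (G : {ffun 'I_k -> X} -> X -> R) :
  (forall r w, 0 <= G r w) ->
  \sum_t G (prefix_pad t) (t j) * \prod_(i < k | (j < i)%N) p i (t i)
  <= \sum_r \sum_w G r w.
Proof.
move=> G_ge0.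
have G_delta t : G (prefix_pad t) (t j) =
    \sum_r \sum_w ((prefix_pad t == r) && (t j == w))%:R * G r w.
  rewrite (bigD1 (prefix_pad t)) //= (bigD1 (t j)) //= !eqxx mul1r.
  rewrite big1 => [|w /negbTE tjw]; last by rewrite eq_sym tjw andbF mul0r.
  rewrite addr0 big1 ?addr0 // => r /negbTE padr.
  by rewrite big1 // => w _; rewrite eq_sym padr mul0r.
under eq_bigr => t _ do rewrite G_delta big_distrl /=.
rewrite exchange_big; apply: ler_sum => r _.
under eq_bigr => t _ do rewrite big_distrl /=.
rewrite exchange_big; apply: ler_sum => w _.
under eq_bigr => t _ do rewrite mulrAC mulrC.
by rewrite -big_distrr /= ler_piMr ?sum_prefix_pad_prod_le1.
Qed.

End PrefixPad.

Section Potential.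
Variables (R : realType) (Omega : finType) (n : nat).
Local Notation state := {ffun 'I_n -> Omega}.
Variable mu : {ffun state -> R}.
Hypothesis mu_ge0 : forall s, 0 <= mu s.

Definition fiber (T : finType) (f : state -> T) (t : T) : {set state} :=
  [set s | f s == t].
Local Notation pin x := (fiber (fun s : state => s x)).

Lemma meas_ge0 (S : {set state}) : 0 <= meas mu S.
Proof. exact: sumr_ge0. Qed.

Lemma meas_partition (T : finType) (f : state -> T) (S : {set state}) :
  \sum_t meas mu (S :&: fiber f t) = meas mu S.
Proof.
rewrite /meas (partition_big f xpredT) //=; apply: eq_bigr => t _.
by apply: eq_bigl => s; rewrite !inE.
Qed.

Lemma le_meas (S S' : {set state}) : S \subset S' -> meas mu S <= meas mu S'.
Proof.
move=> /subsetP sub; rewrite /meas [leLHS]big_mkcond [leRHS]big_mkcond /=.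
by apply: ler_sum => s _; case: ifP => [/sub -> // | _]; case: ifP.
Qed.

Lemma meas_setIl_le (S S' : {set state}) : meas mu (S :&: S') <= meas mu S.
Proof. exact/le_meas/subsetIl. Qed.

Lemma meas_setI_eq0 (S S' : {set state}) : meas mu S = 0 -> meas mu (S :&: S') = 0.
Proof. by move=> S0; apply/eqP; rewrite eq_le meas_ge0 andbT -S0 meas_setIl_le. Qed.

Lemma sum_meas_fiber (T : finType) (f : state -> T) :
  \sum_t meas mu (fiber f t) = meas mu setT.
Proof. by rewrite -(meas_partition f setT); apply: eq_bigr => t _; rewrite setTI. Qed.

Definition split_var (S : {set state}) (T : finType) (g : state -> T) (x : 'I_n) : R :=
  \sum_r \sum_w meas mu (S :&: fiber g r) *
    (meas mu (S :&: fiber g r :&: pin x w) / meas mu (S :&: fiber g r)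
     - meas mu (S :&: pin x w) / meas mu S) ^+ 2.

Lemma split_var_ge0 S (T : finType) (g : state -> T) x : 0 <= split_var S g x.
Proof. by do 2!apply: sumr_ge0 => ? _; rewrite mulr_ge0 ?meas_ge0 ?sqr_ge0. Qed.

Lemma eq_split_var S (T : finType) (g g' : state -> T) x :
  g =1 g' -> split_var S g x = split_var S g' x.
Proof.
move=> eq_g; have eq_fiber r : fiber g r = fiber g' r.
  by apply/setP => s; rewrite !inE eq_g.
by apply: eq_bigr => r _; rewrite eq_fiber.
Qed.

Definition potential (T : finType) (f : state -> T) : R :=
  n%:R^-1 * \sum_x \sum_w \sum_t
    meas mu (fiber f t :&: pin x w) ^+ 2 / meas mu (fiber f t).

Lemma potential_ge0 (T : finType) (f : state -> T) : 0 <= potential f.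
Proof.
rewrite mulr_ge0 ?invr_ge0 ?ler0n //.
by do 3!apply: sumr_ge0 => ? _; rewrite divr_ge0 ?sqr_ge0 ?meas_ge0.
Qed.

Lemma potential_le1 (T : finType) (f : state -> T) :
  (0 < n)%N -> meas mu setT = 1 -> potential f <= 1.
Proof.
move=> n_gt0 mu_setT.
have fiber_le t x : \sum_w meas mu (fiber f t :&: pin x w) ^+ 2 / meas mu (fiber f t)
    <= meas mu (fiber f t).
  rewrite -[leRHS](meas_partition (fun s : state => s x)); apply: ler_sum => w _.
  set b := meas mu (fiber f t).
  have [-> | b_neq0] := eqVneq b 0; first by rewrite invr0 mulr0 meas_ge0.
  have b_gt0 : 0 < b by rewrite lt0r b_neq0 meas_ge0.
  rewrite expr2 -mulrA ler_piMr ?meas_ge0 // ler_pdivrMr // mul1r.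
  exact: meas_setIl_le.
apply: (@le_trans _ _ (n%:R^-1 * \sum_(x < n) (1 : R))).
  rewrite ler_wpM2l ?invr_ge0 ?ler0n //; apply: ler_sum => x _.
  by rewrite exchange_big -mu_setT -(sum_meas_fiber f); apply: ler_sum => t _.
by rewrite sumr_const card_ord -mulr_natr mul1r mulVf // pnatr_eq0 -lt0n.
Qed.

Lemma potential_refine (T T' : finType) (f : state -> T) (g : state -> T') :
  potential (fun s => (f s, g s)) - potential f =
  n%:R^-1 * \sum_t \sum_x split_var (fiber f t) g x.
Proof.
have fiber_pair t r : fiber (fun s => (f s, g s)) (t, r) = fiber f t :&: fiber g r.
  by apply/setP => s; rewrite !inE xpair_eqE.
rewrite /potential -mulrBr; congr (_ * _).
rewrite -sumrB [RHS]exchange_big; apply: eq_bigr => x _ /=.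
rewrite /split_var; under [RHS]eq_bigr => t _ do rewrite exchange_big.
rewrite [RHS]exchange_big -sumrB; apply: eq_bigr => w _ /=.
rewrite (eq_bigr (fun p => meas mu (fiber f p.1 :&: fiber g p.2 :&: pin x w) ^+ 2
    / meas mu (fiber f p.1 :&: fiber g p.2))); last by case=> t r _; rewrite fiber_pair.
rewrite -(pair_bigA _ (fun t r => meas mu (fiber f t :&: fiber g r :&: pin x w) ^+ 2
    / meas mu (fiber f t :&: fiber g r))) -sumrB; apply: eq_bigr => t _ /=.
have sum_a : \sum_r meas mu (fiber f t :&: fiber g r :&: pin x w) =
    meas mu (fiber f t :&: pin x w).
  by rewrite -(meas_partition g); apply: eq_bigr => r _; rewrite setIAC.
rewrite -sum_a -(meas_partition g (fiber f t)) sum_weighted_sqr_dev //.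
by move=> r; apply: meas_setI_eq0.
Qed.

Section Telescope.
Variables (S : {set state}) (k : nat) (xs : {ffun 'I_k -> 'I_n}) (w0 : Omega).
Hypothesis S_gt0 : 0 < meas mu S.
Local Notation M := (meas mu S).

Let M_neq0 : M != 0. Proof. exact: lt0r_neq0. Qed.

Definition marg (x : 'I_n) (w : Omega) : R := meas mu (S :&: pin x w) / M.

Lemma marg_ge0 x w : 0 <= marg x w.
Proof. by rewrite divr_ge0 ?meas_ge0. Qed.

Lemma marg_sum1 x : \sum_w marg x w = 1.
Proof. by rewrite -big_distrl /= meas_partition divff. Qed.

Definition prefix_event (j : nat) (t : {ffun 'I_k -> Omega}) : {set state} :=
  [set s : state | [forall i : 'I_k, (i < j)%N ==> (s (xs i) == t i)]].

Definition hybrid (j : nat) (t : {ffun 'I_k -> Omega}) : R :=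
  meas mu (S :&: prefix_event j t) / M * \prod_(i < k | (j <= i)%N) marg (xs i) (t i).

Lemma hybrid_cond_marg t : cond_marg mu S xs t = hybrid k t.
Proof.
rewrite /hybrid big_pred0 => [|i]; last by rewrite leqNgt ltn_ord.
rewrite mulr1 ffunE; congr (_ / _); apply: eq_bigl => s.
by rewrite !inE; congr (_ && _); apply: eq_forallb => i; rewrite ltn_ord.
Qed.

Lemma hybrid_prod_marg t : prod_marg mu S xs t = hybrid 0 t.
Proof.
rewrite /hybrid.
have -> : S :&: prefix_event 0 t = S.
  by apply/setP => s; rewrite !inE andb_idr // => _; apply/forallP.
rewrite divff // mul1r ffunE; apply: eq_bigr => i _.
by rewrite ffunE; congr (_ / _); apply: eq_bigl => s; rewrite !inE.
Qed.

Definition prefix_coords (j : 'I_k) (s : state) : {ffun 'I_k -> Omega} :=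
  [ffun i : 'I_k => if (i < j)%N then s (xs i) else w0].

Lemma prefix_event_fiber (j : 'I_k) t :
  prefix_event j t = fiber (prefix_coords j) (prefix_pad j w0 t).
Proof.
apply/setP => s; rewrite !inE; apply/forallP/eqP => [eq_pre | eq_pad].
  apply/ffunP => i; rewrite !ffunE; case: ifP => // ij.
  by have /implyP /(_ ij) /eqP := eq_pre i.
move=> i; apply/implyP => ij.
by have := congr1 (fun u : {ffun 'I_k -> Omega} => u i) eq_pad; rewrite !ffunE ij => ->.
Qed.

Lemma prefix_eventS (j : 'I_k) t :
  prefix_event j.+1 t = prefix_event j t :&: pin (xs j) (t j).
Proof.
apply/setP => s; rewrite !inE; apply/forallP/andP => [eq_pre | [/forallP eq_pre eq_j]].
  split; last by have /implyP /(_ (ltnSn j)) := eq_pre j.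
  by apply/forallP => i; apply/implyP => ij; have /implyP -> // := eq_pre i; rewrite ltnS ltnW.
move=> i; apply/implyP; rewrite ltnS leq_eqVlt => /orP [/eqP /val_inj -> // | ij].
by have /implyP -> := eq_pre i.
Qed.

Lemma hybridS_sub (j : 'I_k) t :
  hybrid j.+1 t - hybrid j t =
  (meas mu (S :&: prefix_event j t :&: pin (xs j) (t j)) / M
   - meas mu (S :&: prefix_event j t) / M * marg (xs j) (t j)) *
  \prod_(i < k | (j < i)%N) marg (xs i) (t i).
Proof.
have split_j (F : 'I_k -> R) :
    \prod_(i < k | (j <= i)%N) F i = F j * \prod_(i < k | (j < i)%N) F i.
  rewrite (bigD1 j) //=; congr (_ * _); apply: eq_bigl => i.
  by rewrite ltn_neqAle andbC eq_sym.
by rewrite /hybrid prefix_eventS setIA split_j; ring.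
Qed.

Definition dev_bound (lam : R) (j : 'I_k) (r : {ffun 'I_k -> Omega}) (w : Omega) : R :=
  meas mu (S :&: fiber (prefix_coords j) r) / M *
  ((meas mu (S :&: fiber (prefix_coords j) r :&: pin (xs j) w) /
      meas mu (S :&: fiber (prefix_coords j) r) - marg (xs j) w) ^+ 2 / (2 * lam)
   + lam / 2).

Lemma dev_bound_ge0 lam j r w : 0 < lam -> 0 <= dev_bound lam j r w.
Proof.
move=> /ltW lam_ge0; apply: mulr_ge0; first by rewrite divr_ge0 ?meas_ge0.
by rewrite addr_ge0 ?divr_ge0 ?sqr_ge0 ?mulr_ge0.
Qed.

Lemma norm_hybridS_sub_le (lam : R) (j : 'I_k) t : 0 < lam ->
  `|hybrid j.+1 t - hybrid j t| <=
  dev_bound lam j (prefix_pad j w0 t) (t j) * \prod_(i < k | (j < i)%N) marg (xs i) (t i).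
Proof.
move=> lam_gt0; have prod_ge0 : 0 <= \prod_(i < k | (j < i)%N) marg (xs i) (t i).
  by apply: prodr_ge0 => i _; apply: marg_ge0.
rewrite hybridS_sub normrM [X in _ * X]ger0_norm // ler_wpM2r //.
rewrite /dev_bound -prefix_event_fiber.
set B := meas mu (S :&: prefix_event j t).
set A := meas mu (S :&: prefix_event j t :&: pin (xs j) (t j)).
have [B0 | B_neq0] := eqVneq B 0.
  by rewrite /A (meas_setI_eq0 _ B0) B0 !mul0r subrr normr0.
have -> : A / M - B / M * marg (xs j) (t j) = B / M * (A / B - marg (xs j) (t j)).
  by field; rewrite B_neq0 M_neq0.
have BM_ge0 : 0 <= B / M by rewrite divr_ge0 ?meas_ge0.
by rewrite normrM (ger0_norm BM_ge0) ler_wpM2l // normr_le_amgm.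
Qed.

Lemma sum_dev_bound (lam : R) (j : 'I_k) : 0 < lam ->
  \sum_r \sum_w dev_bound lam j r w =
  split_var S (prefix_coords j) (xs j) / (2 * lam * M) + lam * #|Omega|%:R / 2.
Proof.
move=> lam_gt0; have lam_neq0 : lam != 0 by rewrite lt0r_neq0.
have expand r w : dev_bound lam j r w =
    meas mu (S :&: fiber (prefix_coords j) r) *
    (meas mu (S :&: fiber (prefix_coords j) r :&: pin (xs j) w) /
      meas mu (S :&: fiber (prefix_coords j) r) - marg (xs j) w) ^+ 2 / (2 * lam * M)
    + meas mu (S :&: fiber (prefix_coords j) r) / M * (lam / 2).
  by rewrite /dev_bound; set z := (X in X ^+ 2); field; rewrite M_neq0 lam_neq0.
under eq_bigr => r _ do under eq_bigr => w _ do rewrite expand.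
under eq_bigr => r _ do rewrite big_split /=.
rewrite big_split /= mulr_suml; congr (_ + _).
  by apply: eq_bigr => r _; rewrite mulr_suml.
have sum_const (c : R) : \sum_(w : Omega) c = c * #|Omega|%:R.
  by rewrite sumr_const mulr_natr.
under eq_bigr => r _ do rewrite sum_const.
by rewrite -!big_distrl /= meas_partition divff // mul1r mulrAC.
Qed.

Lemma tv_hybrid_step_le (lam : R) (j : 'I_k) : 0 < lam ->
  2^-1 * \sum_t `|hybrid j.+1 t - hybrid j t| <=
  split_var S (prefix_coords j) (xs j) / (4 * lam * M) + lam * #|Omega|%:R / 4.
Proof.
move=> lam_gt0.
have -> : split_var S (prefix_coords j) (xs j) / (4 * lam * M) + lam * #|Omega|%:R / 4 =
    2^-1 * (split_var S (prefix_coords j) (xs j) / (2 * lam * M) + lam * #|Omega|%:R / 2).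
  by field; rewrite M_neq0 lt0r_neq0.
rewrite -sum_dev_bound // ler_wpM2l ?invr_ge0 ?ler0n //.
apply: le_trans _ (sum_prefix_pad_prod_le j w0 (fun i => marg_ge0 (xs i))
  (fun i => marg_sum1 (xs i)) (fun r w => @dev_bound_ge0 lam j r w lam_gt0)).
by apply: ler_sum => t _; apply: norm_hybridS_sub_le.
Qed.

Lemma tv_cond_prod_marg_le (lam : R) : 0 < lam ->
  tv (cond_marg mu S xs) (prod_marg mu S xs) <=
  \sum_(j < k)
    (split_var S (prefix_coords j) (xs j) / (4 * lam * M) + lam * #|Omega|%:R / 4).
Proof.
move=> lam_gt0; apply: (@le_trans _ _
    (2^-1 * \sum_t \sum_(j < k) `|hybrid j.+1 t - hybrid j t|)).
  rewrite ler_wpM2l ?invr_ge0 ?ler0n //; apply: ler_sum => t _.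
  rewrite hybrid_cond_marg hybrid_prod_marg.
  by rewrite -(telescope_sumr (fun j => hybrid j t) (leq0n k)) big_mkord ler_norm_sum.
rewrite exchange_big big_distrr /=; apply: ler_sum => j _.
exact: tv_hybrid_step_le.
Qed.

End Telescope.

Definition dependence (k : nat) (S : {set state}) : R :=
  (n%:R ^+ k)^-1 *
  \sum_(xs : {ffun 'I_k -> 'I_n}) tv (cond_marg mu S xs) (prod_marg mu S xs).

Definition is_stateb (eps : R) (k : nat) (S : {set state}) : bool :=
  (0 < meas mu S) && (dependence k S < eps).

Lemma is_stateP eps k S : reflect (is_state mu eps k S) (is_stateb eps k S).
Proof. exact: andP. Qed.

Lemma sum_split_var_resample (S : {set state}) k w0 (j : 'I_k) : (0 < n)%N ->
  \sum_(xs : {ffun 'I_k -> 'I_n}) n%:R^-1 * \sum_x split_var S (prefix_coords xs w0 j) x =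
  \sum_(xs : {ffun 'I_k -> 'I_n}) split_var S (prefix_coords xs w0 j) (xs j).
Proof.
move=> n_gt0; rewrite -big_distrr /= (@sum_ffun_resample _ _ _ j) ?card_ord.
  by rewrite mulKf // pnatr_eq0 -lt0n.
move=> xs xs' x eq_xs; apply: eq_split_var => s; apply/ffunP => i; rewrite !ffunE.
by case: ifP => // ij; rewrite eq_xs // neq_ltn ij.
Qed.

Definition bad_rate (eps : R) (k : nat) : R := 3 * eps ^+ 2 / (k%:R * #|Omega|%:R).

Lemma bad_rate_gt0 eps k :
  0 < eps -> (0 < k)%N -> (0 < #|Omega|)%N -> 0 < bad_rate eps k.
Proof. by move=> eps_gt0 k_gt0 Omega_gt0; rewrite divr_gt0 ?mulr_gt0 ?exprn_gt0 ?ltr0n. Qed.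

(* Apply [tv_cond_prod_marg_le] with [lam := eps / (k |Omega|)], which makes its
   additive error [eps / 4]. *)
Lemma nonstate_split_gain eps k (S : {set state}) w0 :
  0 < eps -> (0 < n)%N -> (0 < k)%N -> (0 < #|Omega|)%N ->
  0 < meas mu S -> eps <= dependence k S ->
  bad_rate eps k * meas mu S <=
  (n%:R ^+ k)^-1 * \sum_(xs : {ffun 'I_k -> 'I_n}) \sum_(j < k)
    (n%:R^-1 * \sum_x split_var S (prefix_coords xs w0 j) x).
Proof.
move=> eps_gt0 n_gt0 k_gt0 Omega_gt0 S_gt0 eps_le_dep.
set M := meas mu S; set q : R := #|Omega|%:R; set lam := eps / (k%:R * q).
have q_gt0 : 0 < q by rewrite ltr0n.
have kR_gt0 : 0 < k%:R :> R by rewrite ltr0n.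
have nk_gt0 : 0 < n%:R ^+ k :> R by rewrite exprn_gt0 // ltr0n.
have lam_gt0 : 0 < lam by rewrite divr_gt0 ?mulr_gt0.
rewrite exchange_big /=.
under eq_bigr => j _ do rewrite sum_split_var_resample //.
rewrite exchange_big /=.
set K := \sum_(xs : {ffun 'I_k -> 'I_n}) \sum_(j < k) _.
have sum_bounds : \sum_(xs : {ffun 'I_k -> 'I_n}) \sum_(j < k)
    (split_var S (prefix_coords xs w0 j) (xs j) / (4 * lam * M) + lam * q / 4) =
    K / (4 * lam * M) + n%:R ^+ k * (k%:R * (lam * q / 4)).
  have sum_const (I : finType) (c : R) : \sum_(i : I) c = #|I|%:R * c.
    by rewrite sumr_const mulr_natl.
  under eq_bigr => xs _ do rewrite big_split /=.
  rewrite big_split /= !sum_const card_ffun !card_ord natrX; congr (_ + _).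
  by rewrite mulr_suml; apply: eq_bigr => xs _; rewrite mulr_suml.
have dep_le : dependence k S <= (n%:R ^+ k)^-1 * K / (4 * lam * M) + eps / 4.
  have -> : (n%:R ^+ k)^-1 * K / (4 * lam * M) + eps / 4 =
      (n%:R ^+ k)^-1 * (K / (4 * lam * M) + n%:R ^+ k * (k%:R * (lam * q / 4))).
    by rewrite /lam; field; rewrite !lt0r_neq0.
  rewrite /dependence -sum_bounds ler_wpM2l ?invr_ge0 ?exprn_ge0 ?ler0n //.
  by apply: ler_sum => xs _; apply: tv_cond_prod_marg_le.
have den_gt0 : 0 < 4 * lam * M by apply: mulr_gt0 => //; apply: mulr_gt0.
have -> : bad_rate eps k * M = 3 * eps / 4 * (4 * lam * M).
  by rewrite /bad_rate /lam; field; rewrite !lt0r_neq0.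
by rewrite -ler_pdivlMr //; lra.
Qed.

Definition nonstate_mass (eps : R) (k : nat) (T : finType) (f : state -> T) : R :=
  \sum_(t | ~~ is_stateb eps k (fiber f t)) meas mu (fiber f t).

Lemma nonstate_mass_gain eps k w0 (T : finType) (f : state -> T) :
  0 < eps -> (0 < n)%N -> (0 < k)%N -> (0 < #|Omega|)%N ->
  bad_rate eps k * nonstate_mass eps k f <=
  (n%:R ^+ k)^-1 * \sum_(xs : {ffun 'I_k -> 'I_n}) \sum_(j < k)
    (potential (fun s => (f s, prefix_coords xs w0 j s)) - potential f).
Proof.
move=> eps_gt0 n_gt0 k_gt0 Omega_gt0.
under eq_bigr => xs _ do under eq_bigr => j _ do rewrite potential_refine big_distrr /=.
under eq_bigr => xs _ do rewrite exchange_big /=.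
rewrite exchange_big big_distrr mulr_sumr big_mkcond /=; apply: ler_sum => t _.
have gain_ge0 : 0 <= (n%:R ^+ k)^-1 * \sum_(xs : {ffun 'I_k -> 'I_n}) \sum_(j < k)
    (n%:R^-1 * \sum_x split_var (fiber f t) (prefix_coords xs w0 j) x).
  rewrite mulr_ge0 ?invr_ge0 ?exprn_ge0 ?ler0n //.
  do 2!apply: sumr_ge0 => ? _; rewrite mulr_ge0 ?invr_ge0 ?ler0n //.
  by apply: sumr_ge0 => x _; apply: split_var_ge0.
case: (boolP (is_stateb eps k (fiber f t))) => [_ | /negP not_state] //.
have [fib0 | fib_neq0] := eqVneq (meas mu (fiber f t)) 0; first by rewrite fib0 mulr0.
have fib_gt0 : 0 < meas mu (fiber f t) by rewrite lt0r fib_neq0 meas_ge0.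
apply: nonstate_split_gain => //; rewrite leNgt; apply: contra_notN not_state => dep_lt.
by apply/andP.
Qed.

Definition step_gain (eps : R) (k : nat) : R := bad_rate eps k * eps / (2 * k%:R).

Lemma step_gain_gt0 eps k :
  0 < eps -> (0 < k)%N -> (0 < #|Omega|)%N -> 0 < step_gain eps k.
Proof.
move=> eps_gt0 k_gt0 Omega_gt0; apply: divr_gt0; last by rewrite mulr_gt0 ?ltr0n.
exact: mulr_gt0 (bad_rate_gt0 eps_gt0 k_gt0 Omega_gt0) eps_gt0.
Qed.

Lemma exists_gainful_refinement eps k w0 (T : finType) (f : state -> T) :
  0 < eps -> (0 < n)%N -> (0 < k)%N -> (0 < #|Omega|)%N ->
  eps / 2 <= nonstate_mass eps k f ->
  exists (xs : {ffun 'I_k -> 'I_n}) (j : 'I_k),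
    step_gain eps k <= potential (fun s => (f s, prefix_coords xs w0 j s)) - potential f.
Proof.
move=> eps_gt0 n_gt0 k_gt0 Omega_gt0 mass_ge.
pose gain (xs : {ffun 'I_k -> 'I_n}) (j : 'I_k) :=
  potential (fun s => (f s, prefix_coords xs w0 j s)) - potential f.
suff [[xs j] le_gain] : exists p, step_gain eps k <= gain p.1 p.2 by exists xs, j.
apply: exists_ge_mean; first by rewrite card_prod card_ffun !card_ord muln_gt0 expn_gt0 n_gt0.
have nk_inv_gt0 : 0 < (n%:R ^+ k)^-1 :> R by rewrite invr_gt0 exprn_gt0 // ltr0n.
rewrite -(pair_bigA _ gain) /= -(ler_pM2l nk_inv_gt0).
apply: le_trans (nonstate_mass_gain w0 f eps_gt0 n_gt0 k_gt0 Omega_gt0).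
apply: le_trans (ler_wpM2l (ltW (bad_rate_gt0 eps_gt0 k_gt0 Omega_gt0)) mass_ge).
rewrite card_prod card_ffun !card_ord -[_ *+ (n ^ k * k)]mulr_natr natrM natrX.
rewrite [leLHS](_ : _ = bad_rate eps k * (eps / 2)) ?lexx // /step_gain.
by field; rewrite pnatr_eq0 -lt0n k_gt0 expf_neq0 // pnatr_eq0 -lt0n.
Qed.

Lemma exists_refinement eps k (w0 : Omega) (L : nat) :
  0 < eps -> (0 < n)%N -> (0 < k)%N -> (0 < #|Omega|)%N ->
  exists (T : finType) (f : state -> T),
    (#|T| <= (#|Omega| ^ k) ^ L)%N /\
    (nonstate_mass eps k f < eps / 2 \/ L%:R * step_gain eps k <= potential f).
Proof.
move=> eps_gt0 n_gt0 k_gt0 Omega_gt0; elim: L => [|L [T [f [card_T IH]]]].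
  by exists unit, (fun _ => tt); rewrite card_unit mul0r potential_ge0; split; last right.
have [large | small] := leP (eps / 2) (nonstate_mass eps k f); last first.
  exists T, f; split; last by left.
  by rewrite (leq_trans card_T) // leq_pexp2l // expn_gt0 Omega_gt0.
have {IH} [|pot_f] := IH; first by rewrite ltNge large.
have [xs [j gain]] := exists_gainful_refinement w0 eps_gt0 n_gt0 k_gt0 Omega_gt0 large.
exists (T * {ffun 'I_k -> Omega})%type, (fun s => (f s, prefix_coords xs w0 j s)).
split; first by rewrite card_prod card_ffun !card_ord expnSr leq_mul.
by right; rewrite -addn1 natrD mulrDl mul1r; lra.
Qed.

Lemma large_state_fibers eps k (eta : R) (T : finType) (f : state -> T) :
  meas mu setT = 1 -> 0 <= eta -> nonstate_mass eps k f < eps / 2 ->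
  #|T|%:R * eta <= eps / 2 ->
  exists (N : nat) (S : 'I_N -> {set state}),
    (forall i j : 'I_N, i != j -> [disjoint S i & S j]) /\
    (forall i : 'I_N, is_state mu eps k (S i)) /\
    (forall i : 'I_N, eta <= meas mu (S i)) /\
    1 - eps <= \sum_(i < N) meas mu (S i).
Proof.
move=> mu_setT eta_ge0 small_nonstate small_eta.
set good := [set t | is_stateb eps k (fiber f t) && (eta <= meas mu (fiber f t))].
exists #|good|, (fun i => fiber f (enum_val i)); split.
  move=> i j; apply: contraNT; rewrite -setI_eq0 => /set0Pn [s].
  by rewrite !inE => /andP [/eqP -> /eqP /enum_val_inj ->].
split; first by move=> i; have := enum_valP i; rewrite inE => /andP [/is_stateP].
split; first by move=> i; have := enum_valP i; rewrite inE => /andP [].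
have bad_le : \sum_(t | t \notin good) meas mu (fiber f t) <=
    nonstate_mass eps k f + #|T|%:R * eta.
  have -> : #|T|%:R * eta = \sum_(t : T) eta by rewrite sumr_const mulr_natl.
  rewrite /nonstate_mass big_mkcond [X in _ <= X + _]big_mkcond.
  rewrite -big_split /=; apply: ler_sum => t _; rewrite inE.
  have fib_ge0 := meas_ge0 (fiber f t).
  case: (is_stateb _ _ _) => /=; last by rewrite lerDl.
  by rewrite add0r; case: (leP eta (meas mu (fiber f t))) => // /ltW.
rewrite -(big_enum_val (fun t => meas mu (fiber f t))) /=.
have := sum_meas_fiber f; rewrite mu_setT (bigID (mem good)) /=.
by move: bad_le small_nonstate small_eta; lra.
Qed.

End Potential.

Unset Implicit Arguments.
Set Strict Implicit.

Theorem corollary2p2 (R : realType) (Omega : finType) :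
  (0 < #|Omega|)%N ->
  forall (eps : R), 0 < eps ->
  forall k : nat, (2 <= k)%N ->
  exists eta : R, 0 < eta /\
    forall n : nat, 1 / eta < n%:R ->
    forall mu : {ffun {ffun 'I_n -> Omega} -> R}, is_prob mu ->
    exists (N : nat) (S : 'I_N -> {set {ffun 'I_n -> Omega}}),
      (forall i j : 'I_N, i != j -> [disjoint S i & S j]) /\
      (forall i : 'I_N, is_state mu eps k (S i)) /\
      (forall i : 'I_N, eta <= meas mu (S i)) /\
      1 - eps <= \sum_(i < N) meas mu (S i).
Proof.
move=> Omega_gt0 eps eps_gt0 k k_ge2; have k_gt0 : (0 < k)%N by apply: leq_trans k_ge2.
have gain_gt0 := step_gain_gt0 eps_gt0 k_gt0 Omega_gt0.
pose L := (Num.truncn (step_gain Omega eps k)^-1).+1.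
have L_gain : 1 < L%:R * step_gain Omega eps k.
  by rewrite -ltr_pdivrMr // mul1r truncnS_gt.
pose B := ((#|Omega| ^ k) ^ L)%N.
have B_gt0 : 0 < B%:R :> R by rewrite ltr0n !expn_gt0 Omega_gt0.
exists (eps / (2 * B%:R)); split; first by rewrite divr_gt0 ?mulr_gt0.
move=> n n_large mu [mu_ge0 mu_sum1].
have n_gt0 : (0 < n)%N by rewrite -(ltr0n R) (lt_trans _ n_large) // mul1r invr_gt0 divr_gt0 ?mulr_gt0.
have [w0 _] := card_gt0P Omega_gt0.
have mu_setT : meas mu setT = 1 by rewrite -mu_sum1; apply: eq_bigl => s; rewrite inE.
have [T [f [card_T [small | large]]]] :=
  exists_refinement mu_ge0 w0 L eps_gt0 n_gt0 k_gt0 Omega_gt0; last first.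
  by have := le_trans large (potential_le1 mu_ge0 f n_gt0 mu_setT); lra.
have eta_ge0 : 0 <= eps / (2 * B%:R) by rewrite divr_ge0 ?mulr_ge0 ?(ltW eps_gt0) ?(ltW B_gt0).
apply: (large_state_fibers mu_ge0 mu_setT eta_ge0 small).
have -> : eps / 2 = B%:R * (eps / (2 * B%:R)) by field; rewrite lt0r_neq0.
by rewrite ler_wpM2r // ler_nat.
Qed.
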